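(* Let $k\geqslant 2$ and $m_1,\ldots,m_k\geqslant 4$. Write $S^{m_i}=\{(\mathbf{x}_i,q_i):\mathbf{x}_i\in\mathbb{R}^{m_i-3},\ q_i\in\mathbb{H},\ |\mathbf{x}_i|^2+|q_i|^2=1\}$. Let the quaternionic torus $\mathrm{Sp}(1)^{k-1}$ act on $S^{m_1}\times\cdots\times S^{m_k}$ by \[ (r_1,\ldots,r_{k-1})\cdot((\mathbf{x}_1,q_1),\ldots,(\mathbf{x}_k,q_k))=((\mathbf{x}_1,q_1r_1^{-1}),(\mathbf{x}_2,r_1q_2r_2^{-1}),\ldots,(\mathbf{x}_{k-1},r_{k-2}q_{k-1}r_{k-1}^{-1}),(\mathbf{x}_k,r_{k-1}q_k)). \] Then the orbit space $(S^{m_1}\times\cdots\times S^{m_k})/\mathrm{Sp}(1)^{k-1}$ is homeomorphic to the sphere $S^m$, $m=m_1+\cdots+m_k-3(k-1)$, and the canonical projection onto the orbit space is given by \[ ((\mathbf{x}_1,q_1),\ldots,(\mathbf{x}_k,q_k))\mapsto\frac{(\mathbf{x}_1,\ldots,\mathbf{x}_k,q_1q_2\cdots q_k)}{\sqrt{|\mathbf{x}_1|^2+\cdots+|\mathbf{x}_k|^2+|q_1q_2\cdots q_k|^2}}\in S^m\subset\mathbb{R}^{m_1-3}\times\cdots\times\mathbb{R}^{m_k-3}\times\mathbb{H}. \]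
   Context: $\mathbb{H}$ is the algebra of quaternions with its Euclidean norm; $\mathrm{Sp}(1)$ is the group of unit quaternions. *)

From mathcomp Require Import all_boot all_order all_algebra.
From mathcomp Require Import reals.
Set Implicit Arguments. Unset Strict Implicit. Unset Printing Implicit Defensive.
Import Order.TTheory GRing.Theory Num.Theory.
Local Open Scope ring_scope.

Section Quat.
Variable R : realType.

Record quat := Quat { qre : R; qi : R; qj : R; qk : R }.

Definition qone : quat := Quat 1 0 0 0.

Definition qmul (p q : quat) : quat :=
  Quat (qre p * qre q - qi p * qi q - qj p * qj q - qk p * qk q)
       (qre p * qi q + qi p * qre q + qj p * qk q - qk p * qj q)
       (qre p * qj q - qi p * qk q + qj p * qre q + qk p * qi q)
       (qre p * qk q + qi p * qj q - qj p * qi q + qk p * qre q).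

Definition qconj (q : quat) : quat := Quat (qre q) (- qi q) (- qj q) (- qk q).

Definition qscale (c : R) (q : quat) : quat :=
  Quat (c * qre q) (c * qi q) (c * qj q) (c * qk q).

Definition qsub (p q : quat) : quat :=
  Quat (qre p - qre q) (qi p - qi q) (qj p - qj q) (qk p - qk q).

Definition qnorm2 (q : quat) : R :=
  qre q ^+ 2 + qi q ^+ 2 + qj q ^+ 2 + qk q ^+ 2.

Definition qinv (q : quat) : quat := qscale (qnorm2 q)^-1 (qconj q).

Definition vnorm2 n (v : 'rV[R]_n) : R := \sum_(j < n) v 0 j ^+ 2.

Variables (k : nat) (m : 'I_k -> nat).

Definition dpt := forall i : 'I_k, 'rV[R]_(m i - 3) * quat.

Definition in_dom (a : dpt) : Prop :=
  forall i, vnorm2 (a i).1 + qnorm2 (a i).2 = 1.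

Definition tpt := ((forall i : 'I_k, 'rV[R]_(m i - 3)) * quat)%type.

Definition in_tgt (y : tpt) : Prop :=
  \sum_(i < k) vnorm2 (y.1 i) + qnorm2 y.2 = 1.

(* element (r_1,...,r_{k-1}) of Sp(1)^{k-1}, indexed 0..k-2; out of range = 1 *)
Definition rget (r : 'I_k.-1 -> quat) (j : nat) : quat :=
  match @insub nat (fun j => j < k.-1)%N _ j with Some o => r o | None => qone end.

Definition unit_tuple (r : 'I_k.-1 -> quat) : Prop := forall j, qnorm2 (r j) = 1.

(* i-th component (0-indexed): q_i |-> r_{i-1} q_i r_i^{-1}, with r_{-1} = r_{k-1} = 1 *)
Definition act (r : 'I_k.-1 -> quat) (a : dpt) : dpt :=
  fun i => ((a i).1,
            qmul (qmul (if (i : nat) == 0%N then qone else rget r (i.-1)) (a i).2)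
                 (qinv (rget r i))).

Definition same_orbit (a b : dpt) : Prop :=
  exists r, unit_tuple r /\ forall i, b i = act r a i.

Definition qprod (a : dpt) : quat := \big[qmul/qone]_(i < k) (a i).2.

Definition proj (a : dpt) : tpt :=
  let s := Num.sqrt (\sum_(i < k) vnorm2 (a i).1 + qnorm2 (qprod a)) in
  (fun i => s^-1 *: (a i).1, qscale s^-1 (qprod a)).

Definition ddist2 (a b : dpt) : R :=
  \sum_(i < k) (vnorm2 ((a i).1 - (b i).1) + qnorm2 (qsub (a i).2 (b i).2)).

Definition tdist2 (y z : tpt) : R :=
  \sum_(i < k) vnorm2 (y.1 i - z.1 i) + qnorm2 (qsub y.2 z.2).

End Quat.

Definition openin (R : realType) (T : Type) (S : T -> Prop) (d2 : T -> T -> R)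
  (U : T -> Prop) : Prop :=
  forall x, S x -> U x -> exists e : R, 0 < e /\ forall y, S y -> d2 x y < e -> U y.

(* [proj] factors as the raw map [a |-> (x_1, ..., x_k, q_1 ... q_k)] followed by radial
   projection. On the product of spheres the raw image has norm at least 1 by Weierstrass'
   product inequality [prod_i (1 - |x_i|^2) >= 1 - sum_i |x_i|^2], and both steps are
   Lipschitz, so [proj] is continuous. If [proj a = proj b], the raw images differ by a
   factor [c > 0] with [prod_i (1 - c^2 |x_i|^2) = c^2 prod_i (1 - |x_i|^2)], which forces
   [c = 1]; quaternion sequences with equal norms and equal products are then intertwined by
   unit quaternions [s_i], i.e. they lie in one [Sp(1)^(k-1)]-orbit. Surjectivity: scale the
   [x]-part of a point of [S^m] by [sqrt u], where [u] solves [prod_i (1 - u |x_i|^2) = u |q|^2]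
   by the intermediate value theorem, and distribute [q] among the [q_i]. Finally a continuous
   surjection from a sequentially compact space (Bolzano-Weierstrass) is a quotient map. *)

From HB Require Import structures.
From mathcomp Require Import all_boot all_order all_algebra.
From mathcomp Require Import reals.
From mathcomp Require Import zify ring lra.
From mathcomp Require Import boolp classical_sets topology normedtype sequences.
Import Order.TTheory GRing.Theory Num.Theory numFieldNormedType.Exports.
Local Open Scope ring_scope.
Set Implicit Arguments. Unset Strict Implicit. Unset Printing Implicit Defensive.

Section Quaternions.
Variable R : realType.
Local Notation quat := (quat R).
Local Notation qone := (qone R).
Implicit Types (p q : quat) (c : R).

Definition qreal c : quat := Quat c 0 0 0.

Lemma quat_ext p q :
  qre p = qre q -> qi p = qi q -> qj p = qj q -> qk p = qk q -> p = q.
Proof. by case: p => a b c d; case: q => a' b' c' d' /= -> -> -> ->. Qed.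

Lemma qmulA : associative (@qmul R).
Proof. by move=> p q r; apply: quat_ext => /=; ring. Qed.

Lemma qmul1q : left_id qone (@qmul R).
Proof. by move=> p; apply: quat_ext => /=; ring. Qed.

Lemma qmulq1 : right_id qone (@qmul R).
Proof. by move=> p; apply: quat_ext => /=; ring. Qed.

Lemma qmul0q q : qmul (qreal 0) q = qreal 0.
Proof. by apply: quat_ext => /=; ring. Qed.

Lemma qmulq0 q : qmul q (qreal 0) = qreal 0.
Proof. by apply: quat_ext => /=; ring. Qed.

Lemma qmul_qrealr c p : qmul p (qreal c) = qscale c p.
Proof. by apply: quat_ext => /=; ring. Qed.

Lemma qscaleA c c' q : qscale c (qscale c' q) = qscale (c * c') q.
Proof. by apply: quat_ext => /=; ring. Qed.

Lemma qscale1 q : qscale 1 q = q.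
Proof. by apply: quat_ext => /=; ring. Qed.

Lemma qnorm2M p q : qnorm2 (qmul p q) = qnorm2 p * qnorm2 q.
Proof. by rewrite /qnorm2 /=; ring. Qed.

Lemma qnorm2Z c q : qnorm2 (qscale c q) = c ^+ 2 * qnorm2 q.
Proof. by rewrite /qnorm2 /=; ring. Qed.

Lemma qnorm2_qreal c : qnorm2 (qreal c) = c ^+ 2.
Proof. by rewrite /qnorm2 /=; ring. Qed.

Lemma qnorm2_one : qnorm2 qone = 1.
Proof. by rewrite /qnorm2 /=; ring. Qed.

Lemma qnorm2_ge0 q : 0 <= qnorm2 q.
Proof. by rewrite /qnorm2 !addr_ge0 // sqr_ge0. Qed.

Lemma qnorm2_eq0 q : qnorm2 q = 0 -> q = qreal 0.
Proof.
case: q => a b c d; rewrite /qnorm2 /= => q0.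
have /eqP : a ^+ 2 = 0 by nra.
have /eqP : b ^+ 2 = 0 by nra.
have /eqP : c ^+ 2 = 0 by nra.
have /eqP : d ^+ 2 = 0 by nra.
by rewrite !expf_eq0 /= => /eqP-> /eqP-> /eqP-> /eqP->.
Qed.

Lemma qnorm2_inv q : qnorm2 (qinv q) = (qnorm2 q)^-1.
Proof.
rewrite /qinv qnorm2Z.
have -> : qnorm2 (qconj q) = qnorm2 q by rewrite /qnorm2 /=; ring.
have [->|q0] := eqVneq (qnorm2 q) 0; first by rewrite invr0 mulr0.
by rewrite expr2 -mulrA mulVf // mulr1.
Qed.

Lemma qmulqV q : qnorm2 q != 0 -> qmul q (qinv q) = qone.
Proof.
move=> q0; rewrite /qinv.
have : (qnorm2 q)^-1 * qnorm2 q = 1 by rewrite mulVf.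
by rewrite /qnorm2 => e; apply: quat_ext => /=; nra.
Qed.

Lemma qmulVq q : qnorm2 q != 0 -> qmul (qinv q) q = qone.
Proof.
move=> q0; rewrite /qinv.
have : (qnorm2 q)^-1 * qnorm2 q = 1 by rewrite mulVf.
by rewrite /qnorm2 => e; apply: quat_ext => /=; nra.
Qed.

Lemma qinv_one : qinv qone = qone.
Proof. by rewrite /qinv qnorm2_one invr1; apply: quat_ext => /=; ring. Qed.

Lemma qnorm2_prod n (F : 'I_n -> quat) :
  qnorm2 (\big[@qmul R/qone]_(i < n) F i) = \prod_(i < n) qnorm2 (F i).
Proof. exact: (big_morph _ qnorm2M qnorm2_one). Qed.

Lemma qreal_prod n (F : 'I_n -> R) :
  qreal (\prod_(i < n) F i) = \big[@qmul R/qone]_(i < n) qreal (F i).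
Proof.
by apply: (big_morph qreal) => // c c'; apply: quat_ext => /=; ring.
Qed.

Lemma qnorm2_eq_factor (X Y : quat) :
  qnorm2 X = qnorm2 Y -> exists2 w, qnorm2 w = 1 & X = qmul w Y.
Proof.
move=> XY; have [Y0|Y0] := eqVneq (qnorm2 Y) 0.
  exists qone; first exact: qnorm2_one.
  by rewrite qmul1q (qnorm2_eq0 Y0) (qnorm2_eq0 (etrans XY Y0)).
exists (qmul X (qinv Y)); last by rewrite -qmulA qmulVq // qmulq1.
by rewrite qnorm2M qnorm2_inv XY mulfV.
Qed.

Lemma qnorm2_subMM p p' q q' :
  qnorm2 (qsub (qmul p p') (qmul q q')) <=
  2 * qnorm2 p * qnorm2 (qsub p' q') + 2 * qnorm2 (qsub p q) * qnorm2 q'.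
Proof.
set x := qmul p (qsub p' q'); set y := qmul (qsub p q) q'.
have -> : qsub (qmul p p') (qmul q q') =
    Quat (qre x + qre y) (qi x + qi y) (qj x + qj y) (qk x + qk y).
  by apply: quat_ext => /=; ring.
rewrite -!mulrA -!qnorm2M -/x -/y; clearbody x y; rewrite /qnorm2 /=.
have sqrD_le (a b : R) : (a + b) ^+ 2 <= 2 * a ^+ 2 + 2 * b ^+ 2.
  by have := sqr_ge0 (a - b); nra.
have := sqrD_le (qre x) (qre y); have := sqrD_le (qi x) (qi y).
have := sqrD_le (qj x) (qj y); have := sqrD_le (qk x) (qk y).
lra.
Qed.

End Quaternions.

HB.instance Definition _ (R : realType) :=
  Monoid.isLaw.Build (quat R) (qone R) (@qmul R) (@qmulA R) (@qmul1q R) (@qmulq1 R).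

Section Vectors.
Variable R : realType.
Implicit Types (p q : quat R) (a b : R).

Definition vdot n (u v : 'rV[R]_n) : R := \sum_(j < n) u 0 j * v 0 j.

Definition qdot p q : R :=
  qre p * qre q + qi p * qi q + qj p * qj q + qk p * qk q.

Lemma vnorm2_ge0 n (v : 'rV[R]_n) : 0 <= vnorm2 v.
Proof. by apply: sumr_ge0 => j _; rewrite sqr_ge0. Qed.

Lemma vnorm2Z n a (v : 'rV[R]_n) : vnorm2 (a *: v) = a ^+ 2 * vnorm2 v.
Proof. by rewrite /vnorm2 mulr_sumr; apply: eq_bigr => j _; rewrite mxE; ring. Qed.

Lemma vnorm2_eq0 n (v : 'rV[R]_n) : vnorm2 v = 0 -> v = 0.
Proof.
move=> v0; apply/rowP => j; rewrite mxE.
have /eqP : v 0 j ^+ 2 = 0.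
  apply/eqP; rewrite eq_le sqr_ge0 andbT -v0 /vnorm2.
  by rewrite (bigD1 j) //= lerDl; apply: sumr_ge0 => i _; exact: sqr_ge0.
by rewrite expf_eq0 /= => /eqP.
Qed.

Lemma vnorm2_subZ n a b (u v : 'rV[R]_n) :
  vnorm2 (a *: u - b *: v) =
  a ^+ 2 * vnorm2 u + b ^+ 2 * vnorm2 v - 2 * a * b * vdot u v.
Proof.
rewrite /vnorm2 /vdot !mulr_sumr -big_split -sumrB /=.
by apply: eq_bigr => j _; rewrite !mxE; ring.
Qed.

Lemma qnorm2_subZ a b p q :
  qnorm2 (qsub (qscale a p) (qscale b q)) =
  a ^+ 2 * qnorm2 p + b ^+ 2 * qnorm2 q - 2 * a * b * qdot p q.
Proof. by rewrite /qnorm2 /qdot /=; ring. Qed.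

Lemma one_sub_sum_le_prod (I : Type) (r : seq I) (t : I -> R) :
  (forall i, 0 <= t i <= 1) -> 1 - \sum_(i <- r) t i <= \prod_(i <- r) (1 - t i).
Proof.
move=> t01; elim: r => [|x r IH]; first by rewrite !big_nil subr0.
rewrite !big_cons.
have S0 : 0 <= \sum_(i <- r) t i by apply: sumr_ge0 => i _; have /andP[] := t01 i.
have /andP[tx0 tx1] := t01 x.
have : (1 - t x) * (1 - \sum_(i <- r) t i) <= (1 - t x) * \prod_(i <- r) (1 - t i).
  by apply: ler_wpM2l; lra.
nra.
Qed.

Lemma qnorm2_prod_le1 n (f : 'I_n -> quat R) :
  (forall i, qnorm2 (f i) <= 1) -> qnorm2 (\big[@qmul R/qone R]_(i < n) f i) <= 1.
Proof.
by move=> f1; rewrite qnorm2_prod; apply: prodr_ile1 => i _; rewrite qnorm2_ge0 f1.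
Qed.

Lemma qnorm2_sub_prod_le n (f g : 'I_n -> quat R) :
  (forall i, qnorm2 (f i) <= 1) -> (forall i, qnorm2 (g i) <= 1) ->
  qnorm2 (qsub (\big[@qmul R/qone R]_(i < n) f i) (\big[@qmul R/qone R]_(i < n) g i))
   <= 2 ^+ n * \sum_(i < n) qnorm2 (qsub (f i) (g i)).
Proof.
elim: n f g => [|n IH] f g f1 g1.
  by rewrite !big_ord0 /qnorm2 /=; lra.
rewrite !big_ord_recl exprS; apply: le_trans (qnorm2_subMM _ _ _ _) _.
set F := \big[_/_]_(i < n) f _; set G := \big[_/_]_(i < n) g _.
have IHn : qnorm2 (qsub F G) <= 2 ^+ n * \sum_(i < n) qnorm2 (qsub (f (lift ord0 i)) (g (lift ord0 i))).
  by apply: IH => i; [exact: f1 | exact: g1].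
have G1 : qnorm2 G <= 1 by apply: qnorm2_prod_le1 => i; exact: g1.
have := qnorm2_ge0 (qsub F G); have := qnorm2_ge0 G.
have := qnorm2_ge0 (qsub (f ord0) (g ord0)); have := qnorm2_ge0 (f ord0).
have := f1 ord0; have : 1 <= 2 ^+ n :> R by rewrite exprn_ege1 // ler1n.
set A := qnorm2 (qsub F G) in IHn *; set B := qnorm2 (qsub (f ord0) (g ord0)).
set S := \sum_(i < n) _ in IHn *; nra.
Qed.

End Vectors.

Section Projection.
Variable R : realType.
Variables (k : nat) (m : 'I_k -> nat).
Local Notation dpt := (dpt R m).
Local Notation tpt := (tpt R m).
Implicit Types (a b : dpt) (y z : tpt).

Definition tnorm2 y : R := \sum_(i < k) vnorm2 (y.1 i) + qnorm2 y.2.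

Definition tdot y z : R := \sum_(i < k) vdot (y.1 i) (z.1 i) + qdot y.2 z.2.

Definition tscale (c : R) y : tpt := (fun i => c *: y.1 i, qscale c y.2).

Definition rawproj a : tpt := (fun i => (a i).1, qprod a).

Lemma projE a : proj a = tscale (Num.sqrt (tnorm2 (rawproj a)))^-1 (rawproj a).
Proof. by []. Qed.

Lemma tdist2_tscale c c' y z :
  tdist2 (tscale c y) (tscale c' z) =
  c ^+ 2 * tnorm2 y + c' ^+ 2 * tnorm2 z - 2 * c * c' * tdot y z.
Proof.
rewrite /tdist2 /tnorm2 /tdot /= qnorm2_subZ.
have -> : \sum_(i < k) vnorm2 (c *: y.1 i - c' *: z.1 i) =
    c ^+ 2 * \sum_(i < k) vnorm2 (y.1 i) + c' ^+ 2 * \sum_(i < k) vnorm2 (z.1 i)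
    - 2 * c * c' * \sum_(i < k) vdot (y.1 i) (z.1 i).
  by rewrite !mulr_sumr -big_split -sumrB /=; apply: eq_bigr => i _; exact: vnorm2_subZ.
ring.
Qed.

Lemma tdist2E y z : tdist2 y z = tnorm2 y + tnorm2 z - 2 * tdot y z.
Proof.
have -> : tdist2 y z = tdist2 (tscale 1 y) (tscale 1 z).
  rewrite /tdist2 /tscale /= !qscale1; congr (_ + _).
  by apply: eq_bigr => i _; rewrite !scale1r.
by rewrite tdist2_tscale; ring.
Qed.

Lemma tdist2_ge0 y z : 0 <= tdist2 y z.
Proof.
by rewrite addr_ge0 ?qnorm2_ge0 //; apply: sumr_ge0 => i _; exact: vnorm2_ge0.
Qed.

Lemma tnorm2_tscale c y : tnorm2 (tscale c y) = c ^+ 2 * tnorm2 y.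
Proof.
rewrite /tnorm2 /= qnorm2Z [RHS]mulrDr [X in _ = X + _]mulr_sumr; congr (_ + _).
by apply: eq_bigr => i _; rewrite vnorm2Z.
Qed.

Lemma in_dom_qnorm2 a i : in_dom a -> qnorm2 (a i).2 = 1 - vnorm2 (a i).1.
Proof. by move=> /(_ i) <-; ring. Qed.

Lemma in_dom_bounds a i : in_dom a ->
  0 <= vnorm2 (a i).1 <= 1 /\ 0 <= qnorm2 (a i).2 <= 1.
Proof.
move/(_ i); have := vnorm2_ge0 (a i).1; have := qnorm2_ge0 (a i).2.
by move=> q0 x0 a1; split; apply/andP; split; lra.
Qed.

(* Weierstrass' product inequality gives [|q_1 ... q_k|^2 >= 1 - sum_i |x_i|^2]. *)
Lemma tnorm2_rawproj_ge1 a : in_dom a -> 1 <= tnorm2 (rawproj a).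
Proof.
move=> da; rewrite /tnorm2 /= /qprod qnorm2_prod.
have -> : \prod_(i < k) qnorm2 (a i).2 = \prod_(i < k) (1 - vnorm2 (a i).1).
  by apply: eq_bigr => i _; exact: in_dom_qnorm2.
have := one_sub_sum_le_prod (index_enum 'I_k) (fun i => (in_dom_bounds i da).1).
by lra.
Qed.

Lemma in_tgt_proj a : in_dom a -> in_tgt (proj a).
Proof.
move=> /tnorm2_rawproj_ge1 N1.
rewrite /in_tgt -/(tnorm2 (proj a)) projE tnorm2_tscale exprVn sqr_sqrtr; last lra.
by rewrite mulVf // gt_eqF //; lra.
Qed.

Lemma tdist2_normalize_le y z : 1 <= tnorm2 y -> 1 <= tnorm2 z ->
  tdist2 (tscale (Num.sqrt (tnorm2 y))^-1 y) (tscale (Num.sqrt (tnorm2 z))^-1 z)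
  <= tdist2 y z.
Proof.
move=> y1 z1; rewrite tdist2_tscale tdist2E.
have D0 := tdist2_ge0 y z; rewrite tdist2E in D0.
set s := Num.sqrt (tnorm2 y); set t := Num.sqrt (tnorm2 z); set D := tdot y z in D0 *.
have s2 : s ^+ 2 = tnorm2 y by rewrite sqr_sqrtr //; lra.
have t2 : t ^+ 2 = tnorm2 z by rewrite sqr_sqrtr //; lra.
rewrite -s2 -t2 in D0 *.
have s1 : 1 <= s by rewrite -sqrtr1 ler_sqrt //; lra.
have t1 : 1 <= t by rewrite -sqrtr1 ler_sqrt //; lra.
have ss : s^-1 * s = 1 by rewrite mulVf // gt_eqF //; lra.
have tt : t^-1 * t = 1 by rewrite mulVf // gt_eqF //; lra.
have s0 : 0 < s^-1 by rewrite invr_gt0; lra.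
have t0 : 0 < t^-1 by rewrite invr_gt0; lra.
move: ss tt s0 t0; set a := s^-1; set b := t^-1 => ss tt s0 t0.
have ab1 : a * b * (s * t) = 1 by rewrite mulrACA ss tt mulr1.
have -> : a ^+ 2 * s ^+ 2 = 1 by rewrite -exprMn ss expr1n.
have -> : b ^+ 2 * t ^+ 2 = 1 by rewrite -exprMn tt expr1n.
have st1 : 1 <= s * t by nra.
have h1 : 0 <= (s ^+ 2 + t ^+ 2 - 2 * D) * (1 - a * b) by apply: mulr_ge0; nra.
have h2 : 0 <= (a * b) * (s - t) ^+ 2 by apply: mulr_ge0; [nra | exact: sqr_ge0].
nra.
Qed.

Lemma tdist2_rawproj_le a b : in_dom a -> in_dom b ->
  tdist2 (rawproj a) (rawproj b) <= 2 ^+ k * ddist2 a b.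
Proof.
move=> da db; rewrite /tdist2 /ddist2 /= big_split /= mulrDr.
have := qnorm2_sub_prod_le (fun i => (andP (in_dom_bounds i da).2).2)
  (fun i => (andP (in_dom_bounds i db).2).2).
have : \sum_(i < k) vnorm2 ((a i).1 - (b i).1) <=
    2 ^+ k * \sum_(i < k) vnorm2 ((a i).1 - (b i).1).
  rewrite ler_peMl ?exprn_ege1 ?ler1n //.
  by apply: sumr_ge0 => i _; exact: vnorm2_ge0.
rewrite /qprod; lra.
Qed.

Lemma tdist2_proj_le a b : in_dom a -> in_dom b ->
  tdist2 (proj a) (proj b) <= 2 ^+ k * ddist2 a b.
Proof.
move=> da db; rewrite !projE.
apply: le_trans (tdist2_rawproj_le da db).
exact: tdist2_normalize_le (tnorm2_rawproj_ge1 da) (tnorm2_rawproj_ge1 db).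
Qed.

Lemma proj_continuous a : in_dom a -> forall e : R, 0 < e ->
  exists d : R, 0 < d /\ forall b, in_dom b -> ddist2 a b < d ->
    tdist2 (proj a) (proj b) < e.
Proof.
move=> da e e0; have k0 : 0 < 2 ^+ k :> R by rewrite exprn_gt0.
exists (e / 2 ^+ k); split => [|b db ab]; first by rewrite divr_gt0.
apply: le_lt_trans (tdist2_proj_le da db) _.
by rewrite mulrC -ltr_pdivlMr.
Qed.

End Projection.

Section Intertwining.
Variable R : realType.
Local Notation quat := (quat R).
Local Notation qone := (qone R).

Lemma qprod_conj_telescope n (f : 'I_n -> quat) (s : nat -> quat) :
  (forall j, qnorm2 (s j) = 1) ->
  \big[@qmul R/qone]_(i < n) qmul (qmul (s i) (f i)) (qinv (s i.+1)) =
  qmul (qmul (s 0%N) (\big[@qmul R/qone]_(i < n) f i)) (qinv (s n)).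
Proof.
move=> s1; have s0 j : qnorm2 (s j) != 0 by rewrite s1 oner_neq0.
elim: n f => [|n IH] f; first by rewrite !big_ord0 qmulq1 qmulqV.
rewrite !big_ord_recr /= (IH (fun i => f (widen_ord (leqnSn n) i))) /=.
by rewrite -!qmulA; do 2 congr qmul; rewrite !qmulA qmulVq ?qmul1q.
Qed.

(* The [s_i] are chosen one at a time: when [Q_0] is invertible [s_1] is forced, otherwise it
   is chosen so that the remaining products still match. *)
Lemma qprod_intertwine n (P Q : 'I_n -> quat) (u v : quat) :
  qnorm2 u = 1 -> qnorm2 v = 1 -> (forall i, qnorm2 (P i) = qnorm2 (Q i)) ->
  qmul (\big[@qmul R/qone]_(i < n) P i) v = qmul u (\big[@qmul R/qone]_(i < n) Q i) ->
  exists s : nat -> quat, [/\ s 0%N = u, s n = v, forall j, qnorm2 (s j) = 1 &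
    forall i : 'I_n, qmul (P i) (s i.+1) = qmul (s i) (Q i)].
Proof.
elim: n P Q u => [|n IH] P Q u u1 v1 PQ.
  by rewrite !big_ord0 qmul1q qmulq1 => <-; exists (fun=> v); split => // -[].
rewrite !big_ord_recl.
set P' := \big[_/_]_(i < n) P _; set Q' := \big[_/_]_(i < n) Q _ => hPQ.
have [s1 s1u [hs1 htail]] : exists2 s1, qnorm2 s1 = 1 &
    qmul (P ord0) s1 = qmul u (Q ord0) /\ qmul P' v = qmul s1 Q'.
  have [Q0|Q0] := eqVneq (qnorm2 (Q ord0)) 0.
    have [|w w1 hw] := qnorm2_eq_factor (X := qmul P' v) (Y := Q').
      by rewrite qnorm2M v1 mulr1 !qnorm2_prod; apply: eq_bigr => i _.
    exists w => //; split => //.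
    by rewrite (qnorm2_eq0 Q0) (qnorm2_eq0 (etrans (PQ _) Q0)) qmul0q qmulq0.
  have P0 : qnorm2 (P ord0) != 0 by rewrite PQ.
  exists (qmul (qmul (qinv (P ord0)) u) (Q ord0)).
    by rewrite !qnorm2M qnorm2_inv u1 PQ mulr1 mulVf.
  split; first by rewrite !qmulA qmulqV // qmul1q.
  by rewrite -!qmulA -hPQ !qmulA qmulVq // qmul1q.
have [s' [s'0 s'n s'u hs']] := IH _ _ _ s1u v1 (fun i => PQ _) htail.
exists (fun j => if j is j'.+1 then s' j' else u); split => // [[|j] //|i].
by case: (unliftP ord0 i) => [j ->|->] //=; rewrite s'0.
Qed.

Lemma scale_eq1_of_prod n (T : 'I_n -> R) (u : R) :
  (forall i, 0 <= T i <= 1) -> 0 < u -> (forall i, u * T i <= 1) ->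
  \prod_(i < n) (1 - u * T i) = u * \prod_(i < n) (1 - T i) -> u = 1.
Proof.
move=> T01 u0 uT1 hu.
have P0 : 0 <= \prod_(i < n) (1 - T i).
  by apply: prodr_ge0 => i _; have /andP[] := T01 i; lra.
have [u1|u1|//] := ltgtP u 1.
- have hle : \prod_(i < n) (1 - T i) <= \prod_(i < n) (1 - u * T i).
    apply: ler_prod => i _; have /andP[t0 t1] := T01 i.
    by apply/andP; split; nra.
  have : 0 < \prod_(i < n) (1 - u * T i).
    by apply: prodr_gt0 => i _; have /andP[t0 t1] := T01 i; nra.
  by rewrite hu; nra.
- have hle : \prod_(i < n) (1 - u * T i) <= \prod_(i < n) (1 - T i).
    apply: ler_prod => i _; have /andP[t0 t1] := T01 i; have := uT1 i.
    by move=> h; apply/andP; split; nra.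
  have [/eqP|Ppos] := eqVneq (\prod_(i < n) (1 - T i)) 0; last first.
    have : 0 < \prod_(i < n) (1 - T i) by rewrite lt_def Ppos P0.
    by rewrite hu in hle; nra.
  case/prodf_eq0 => j _ /eqP Tj.
  have Tj1 : T j = 1 by lra.
  by have := uT1 j; rewrite Tj1 mulr1; lra.
Qed.

End Intertwining.

Section Fibres.
Variable R : realType.
Variables (k : nat) (m : 'I_k -> nat).
Local Notation dpt := (dpt R m).
Local Notation quat := (quat R).
Local Notation qone := (qone R).
Implicit Types (a b : dpt) (r : 'I_k.-1 -> quat).

Lemma rget_unit r j : unit_tuple r -> qnorm2 (rget r j) = 1.
Proof. by move=> ru; rewrite /rget; case: insubP => [o _ _|_]; [exact: ru | exact: qnorm2_one]. Qed.

Lemma rget_shift (s : nat -> quat) j : (j < k)%N -> s k = qone ->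
  rget (fun o : 'I_k.-1 => s o.+1) j = s j.+1.
Proof.
move=> jk sk; rewrite /rget; case: insubP => [o _ <- //|].
by rewrite -leqNgt => kj; rewrite -sk; congr s; lia.
Qed.

Lemma qprod_act r a : unit_tuple r -> qprod (act r a) = qprod a.
Proof.
move=> ru; pose s j := if j == 0%N then qone else rget r j.-1.
have s1 j : qnorm2 (s j) = 1.
  by rewrite /s; case: eqP => _; [exact: qnorm2_one | exact: rget_unit].
have sk : s k = qone.
  by rewrite /s; case: eqP => // k0; rewrite /rget insubF // ltnn.
rewrite /qprod /act /= (eq_bigr (fun i : 'I_k => qmul (qmul (s i) (a i).2) (qinv (s i.+1)))) //.
by rewrite qprod_conj_telescope // sk qinv_one qmulq1 qmul1q.
Qed.

Lemma proj_act r a : unit_tuple r -> proj (act r a) = proj a.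
Proof. by move=> ru; rewrite !projE /rawproj qprod_act. Qed.

Lemma proj_eq_of_orbit a b : same_orbit a b -> proj a = proj b.
Proof.
by case=> r [ru ba]; rewrite (functional_extensionality_dep ba) proj_act.
Qed.

Lemma rawproj_eq_of_proj a b : in_dom a -> in_dom b ->
  proj a = proj b -> rawproj a = rawproj b.
Proof.
move=> da db; rewrite !projE.
have [a1 b1] := (tnorm2_rawproj_ge1 da, tnorm2_rawproj_ge1 db).
set sa := Num.sqrt _; set sb := Num.sqrt _.
have sa1 : 1 <= sa by rewrite -sqrtr1 ler_sqrt //; lra.
have sb1 : 1 <= sb by rewrite -sqrtr1 ler_sqrt //; lra.
have [sa0 sb0] : sa != 0 /\ sb != 0 by split; rewrite gt_eqF //; lra.
move=> ab; pose c := sb / sa.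
have xb i : (b i).1 = c *: (a i).1.
  have /(congr1 (fun v => sb *: v)) := congr1 (fun y => y.1 i) ab.
  by rewrite /= !scalerA mulfV // scale1r => <-.
have qb : qprod b = qscale c (qprod a).
  have /(congr1 (qscale sb)) := congr1 snd ab.
  by rewrite /= !qscaleA mulfV // qscale1 => <-.
have c0 : 0 < c by rewrite divr_gt0 //; lra.
have c1 : c ^+ 2 = 1.
  apply: (@scale_eq1_of_prod _ _ (fun i => vnorm2 (a i).1)).
  - by move=> i; have [] := in_dom_bounds i da.
  - by rewrite exprn_gt0.
  - by move=> i; rewrite -vnorm2Z -xb; have [/andP[]] := in_dom_bounds i db.
  have <- : \prod_(i < k) qnorm2 (b i).2 = \prod_(i < k) (1 - c ^+ 2 * vnorm2 (a i).1).
    by apply: eq_bigr => i _; rewrite in_dom_qnorm2 // xb vnorm2Z.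
  have <- : \prod_(i < k) qnorm2 (a i).2 = \prod_(i < k) (1 - vnorm2 (a i).1).
    by apply: eq_bigr => i _; rewrite in_dom_qnorm2.
  by rewrite -!qnorm2_prod -qnorm2Z -qb.
have {}c1 : c = 1 by nra.
rewrite /rawproj qb c1 qscale1; congr pair.
by apply: functional_extensionality_dep => i; rewrite xb c1 scale1r.
Qed.

Lemma same_orbit_of_rawproj a b : in_dom a -> in_dom b ->
  rawproj a = rawproj b -> same_orbit a b.
Proof.
move=> da db ab.
have xab i : (b i).1 = (a i).1 by have := congr1 (fun y => y.1 i) ab.
have [s [s0 sk s1 hs]] : exists s : nat -> quat, [/\ s 0%N = qone, s k = qone,
    forall j, qnorm2 (s j) = 1 &
    forall i : 'I_k, qmul (b i).2 (s i.+1) = qmul (s i) (a i).2].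
  apply: qprod_intertwine; rewrite ?qnorm2_one ?qmulq1 ?qmul1q //.
    by move=> i; rewrite !in_dom_qnorm2 // xab.
  exact: (congr1 snd (esym ab)).
exists (fun o => s o.+1); split => [j|i]; first exact: s1.
have s0' : qnorm2 (s i.+1) != 0 by rewrite s1 oner_neq0.
rewrite [b i]surjective_pairing xab /act (rget_shift (ltn_ord i) sk); congr pair.
have -> : (if i == 0%N :> nat then qone else rget (fun o : 'I_k.-1 => s o.+1) i.-1) = s i.
  case: eqP => [-> //|i0]; have ik := ltn_ord i.
  by rewrite rget_shift //; [congr s |]; lia.
by rewrite -hs -qmulA qmulqV // qmulq1.
Qed.

End Fibres.

Section Surjectivity.
Variable R : realType.

(* The intermediate value theorem for [u |-> u P - prod_i (1 - u T_i)] on [[1, 1 / max_i T_i]]. *)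
Lemma prod1B_root n (T : 'I_n -> R) (P : R) :
  (forall i, 0 <= T i) -> 0 <= P -> \sum_(i < n) T i + P = 1 ->
  exists u, [/\ 1 <= u, forall i, u * T i <= 1 & \prod_(i < n) (1 - u * T i) = u * P].
Proof.
move=> T0 P0 TP1.
have [/forallP T_0|/forallPn[i0 Ti0]] := boolP [forall i, T i == 0].
  exists 1; split => // [i|]; first by rewrite (eqP (T_0 i)) mulr0.
  rewrite big1 => [|i _]; last by rewrite (eqP (T_0 i)) mulr0 subr0.
  by rewrite big1 in TP1 => [|i _]; [lra | exact/eqP].
have [j _ Tmax] := @arg_maxP _ _ _ i0 predT T isT.
have Tj0 : 0 < T j by rewrite (lt_le_trans _ (Tmax i0 isT)) // lt_def Ti0 T0.
have Tj1 : T j <= 1.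
  suff : T j <= \sum_(i < n) T i by lra.
  by rewrite (bigD1 j) //= lerDl; apply: sumr_ge0.
pose p : {poly R} := P *: 'X - \prod_(i < n) (1 - T i *: 'X).
have pE x : p.[x] = P * x - \prod_(i < n) (1 - T i * x).
  rewrite hornerD hornerN hornerZ hornerX horner_prod; congr (_ - _).
  by apply: eq_bigr => i _; rewrite hornerD hornerN hornerZ hornerX hornerC.
have [||u /andP[u1 uM] /rootP] := @poly_ivt R p 1 (T j)^-1.
- by rewrite invf_ge1.
- rewrite !pE; apply/andP; split.
    under eq_bigr do rewrite mulr1.
    have T01 i : 0 <= T i <= 1 by rewrite T0 (le_trans (Tmax i isT)).
    by have := one_sub_sum_le_prod (index_enum 'I_n) T01; lra.
  rewrite (bigD1 j) //= mulfV ?gt_eqF // subrr mul0r subr0.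
  by rewrite mulr_ge0 // invr_ge0 ltW.
- rewrite pE => pu; exists u; split => // [i|]; last by under eq_bigr do rewrite mulrC; lra.
  rewrite -(@mulVf _ (T j)) ?gt_eqF //.
  by apply: ler_pM => //; [lra | exact: Tmax].
Qed.

Lemma qscale_surj (N c : R) (w : quat R) : N ^+ 2 * c ^+ 2 = qnorm2 w ->
  exists2 q, qnorm2 q = c ^+ 2 & qscale N q = w.
Proof.
have [->|N0] := eqVneq N 0.
  rewrite expr0n mul0r => /esym/qnorm2_eq0->; exists (qreal c); first exact: qnorm2_qreal.
  by apply: quat_ext => /=; ring.
move=> Nw; exists (qscale N^-1 w); last by rewrite qscaleA mulfV ?qscale1.
by rewrite qnorm2Z -Nw exprVn mulrA mulVf ?mul1r // expf_neq0.
Qed.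

Variables (n : nat) (m : 'I_n.+1 -> nat).
Local Notation dpt := (dpt R m).
Local Notation tpt := (tpt R m).

(* Scale the [x]-part of [y] by [lam = sqrt u] and give every [q_i] the norm [sqrt (1 - u |x_i|^2)]:
   [q_i] is real for [i > 0] and [q_0] is chosen so that [q_0 ... q_n = lam y.2]. *)
Lemma proj_surj (y : tpt) : in_tgt y -> exists a : dpt, in_dom a /\ proj a = y.
Proof.
move=> y1; pose T i := vnorm2 (y.1 i).
have [u [u1 uT1 hu]] := prod1B_root (fun i => vnorm2_ge0 (y.1 i)) (qnorm2_ge0 y.2) y1.
pose lam := Num.sqrt u; pose r i := Num.sqrt (1 - u * T i).
have lam2 : lam ^+ 2 = u by rewrite sqr_sqrtr //; lra.
have lam0 : 0 < lam by rewrite sqrtr_gt0; lra.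
have r2 i : r i ^+ 2 = 1 - u * T i by rewrite sqr_sqrtr // subr_ge0 uT1.
pose N := \prod_(i < n) r (lift ord0 i).
have [q0 q0r q0N] : exists2 q0, qnorm2 q0 = r ord0 ^+ 2 & qscale N q0 = qscale lam y.2.
  apply: qscale_surj; rewrite qnorm2Z lam2 -hu big_ord_recl r2 mulrC -prodrXl.
  by congr (_ * _); apply: eq_bigr => i _; rewrite r2.
pose a : dpt := fun i => (lam *: y.1 i, if i == ord0 then q0 else qreal (r i)).
have qa : qprod a = qscale lam y.2.
  rewrite /qprod big_ord_recl /= -q0N -qmul_qrealr /N qreal_prod.
  by congr qmul; apply: eq_bigr.
exists a; split.
  move=> i; rewrite /= vnorm2Z lam2 -/(T i).
  by case: eqP => [->|_]; rewrite ?q0r ?qnorm2_qreal r2; ring.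
have ra : rawproj a = tscale lam y by rewrite /rawproj qa.
rewrite projE ra tnorm2_tscale (y1 : tnorm2 y = 1) mulr1 lam2 /tscale /= qscaleA mulVf ?gt_eqF // qscale1.
rewrite [y]surjective_pairing /=; congr pair.
by apply: functional_extensionality_dep => i; rewrite scalerA mulVf ?gt_eqF // scale1r.
Qed.

End Surjectivity.

Section TargetMetric.
Variable R : realType.
Variables (k : nat) (m : 'I_k -> nat).
Local Notation tpt := (tpt R m).
Implicit Types (x y z : tpt).

Lemma tdist2C x y : tdist2 x y = tdist2 y x.
Proof.
rewrite /tdist2; congr (_ + _); last by rewrite /qnorm2 /=; ring.
by apply: eq_bigr => i _; rewrite /vnorm2; apply: eq_bigr => j _; rewrite !mxE; ring.
Qed.

Lemma tdist2_triangle x y z : tdist2 x z <= 2 * tdist2 x y + 2 * tdist2 y z.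
Proof.
have sqrB_le (a b c : R) : (a - c) ^+ 2 <= 2 * (a - b) ^+ 2 + 2 * (b - c) ^+ 2.
  by have := sqr_ge0 (a - 2 * b + c); nra.
have vle : \sum_(i < k) vnorm2 (x.1 i - z.1 i) <=
    2 * \sum_(i < k) vnorm2 (x.1 i - y.1 i) + 2 * \sum_(i < k) vnorm2 (y.1 i - z.1 i).
  rewrite !mulr_sumr -big_split /=; apply: ler_sum => i _.
  rewrite /vnorm2 !mulr_sumr -big_split /=; apply: ler_sum => j _; rewrite !mxE.
  exact: sqrB_le.
rewrite /tdist2 /qnorm2 /=.
have := sqrB_le (qre x.2) (qre y.2) (qre z.2); have := sqrB_le (qi x.2) (qi y.2) (qi z.2).
have := sqrB_le (qj x.2) (qj y.2) (qj z.2); have := sqrB_le (qk x.2) (qk y.2) (qk z.2).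
lra.
Qed.

Lemma tdist2_eq0 x y : tdist2 x y = 0 -> x = y.
Proof.
move=> xy0; have v0 : 0 <= \sum_(i < k) vnorm2 (x.1 i - y.1 i).
  by apply: sumr_ge0 => i _; exact: vnorm2_ge0.
have := qnorm2_ge0 (qsub x.2 y.2); move: xy0; rewrite /tdist2 => xy0 q0.
have /qnorm2_eq0 [] : qnorm2 (qsub x.2 y.2) = 0 by lra.
move=> /subr0_eq ex /subr0_eq ei /subr0_eq ej /subr0_eq ek.
rewrite [x]surjective_pairing [y]surjective_pairing; congr pair; last first.
  by move: ex ei ej ek; case: x.2 => ? ? ? ?; case: y.2 => ? ? ? ? /= -> -> -> ->.
have vi := @psumr_eq0P _ _ xpredT (fun i => vnorm2 (x.1 i - y.1 i)) (fun i _ => vnorm2_ge0 _).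
apply: functional_extensionality_dep => i; apply/subr0_eq/vnorm2_eq0.
by apply: vi => //; lra.
Qed.

End TargetMetric.

Section Compactness.
Local Open Scope classical_set_scope.
Variable R : realType.

Lemma increasing_seq_cvgn (f : nat -> nat) : increasing_seq f -> f @ \oo --> \oo.
Proof.
move=> /increasing_seqP incf; apply/cvgnyPge => A; near=> n.
have f_ge p : (p <= f p)%N by elim: p => // p IH; exact: leq_ltn_trans IH (incf p).
by apply: leq_trans (f_ge n); near: n; apply: nbhs_infty_ge.
Unshelve. all: end_near. Qed.

Lemma bolzano_weierstrass_fin (I : finType) (u : I -> R ^nat) :
  (forall i, bounded_fun (u i)) ->
  exists2 f : nat -> nat, increasing_seq f & forall i, cvgn (u i \o f).
Proof.
move=> bu.
suff [f incf cvgf] : exists2 f : nat -> nat, increasing_seq f &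
    forall i, i \in enum I -> cvgn (u i \o f).
  by exists f => // i; apply: cvgf; rewrite mem_enum.
elim: (enum I) => [|x s [f incf cvgf]]; first by exists id.
have [g incg /cvg_ex[l ul]] : exists2 g : nat -> nat, increasing_seq g & cvgn ((u x \o f) \o g).
  apply: bolzano_weierstrass; case: (bu x) => M [Mr uM].
  by exists M; split => // N /uM uN n _; exact: uN.
exists (f \o g); first by move=> p q; exact: etrans (incf _ _) (incg _ _).
move=> i; rewrite in_cons => /orP[/eqP->|/cvgf /cvg_ex[li uli]]; apply/cvg_ex.
  by exists l.
by exists li; exact: cvg_comp (increasing_seq_cvgn incg) uli.
Qed.

Lemma cvg_sum_sqr (I : finType) (v : nat -> I -> R) (w : I -> R) :
  (forall i, v n i @[n --> \oo] --> w i) ->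
  \sum_i v n i ^+ 2 @[n --> \oo] --> \sum_i w i ^+ 2.
Proof.
move=> vw; apply: cvg_big => //; first exact: add_continuous.
by move=> i _; apply: cvgM.
Qed.

Definition qcoord (q : quat R) (l : 'I_4) : R := [:: qre q; qi q; qj q; qk q]`_l.

Definition quat_of (f : 'I_4 -> R) : quat R :=
  Quat (f ord0) (f (inord 1)) (f (inord 2)) (f (inord 3)).

Lemma qcoordK f : qcoord (quat_of f) =1 f.
Proof. by case=> -[|[|[|[|//]]]] l4 /=; congr f; apply: val_inj; rewrite /= ?inordK. Qed.

Lemma qnorm2_sub_qcoord p q :
  qnorm2 (qsub p q) = \sum_(l < 4) (qcoord p l - qcoord q l) ^+ 2.
Proof. by rewrite /qnorm2 !big_ord_recl big_ord0 addr0 /= !addrA. Qed.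

Lemma qnorm2_qcoord q : qnorm2 q = \sum_(l < 4) qcoord q l ^+ 2.
Proof. by rewrite /qnorm2 !big_ord_recl big_ord0 addr0 /= !addrA. Qed.

Variables (k : nat) (m : 'I_k -> nat).
Local Notation dpt := (dpt R m).

Definition coordinate := {i : 'I_k & ('I_(m i - 3) + 'I_4)%type}.

Definition cell i (s : 'I_(m i - 3) + 'I_4) : coordinate :=
  @Tagged _ i (fun i => ('I_(m i - 3) + 'I_4)%type) s.

Definition coord (a : dpt) (t : coordinate) : R :=
  match tagged t with
  | inl j => (a (tag t)).1 0 j
  | inr l => qcoord (a (tag t)).2 l
  end.

Lemma block_norm2_coord (a : dpt) i :
  vnorm2 (a i).1 + qnorm2 (a i).2 =
  \sum_(s : 'I_(m i - 3) + 'I_4) coord a (cell s) ^+ 2.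
Proof. by rewrite big_sumType qnorm2_qcoord. Qed.

Lemma ddist2_coord (a b : dpt) :
  ddist2 a b = \sum_(t : coordinate) (coord a t - coord b t) ^+ 2.
Proof.
have := sig_big_dep (R := R) (op := +%R) (J := fun i => ('I_(m i - 3) + 'I_4)%type)
  xpredT (fun _ => xpredT) (fun i s => (coord a (cell s) - coord b (cell s)) ^+ 2).
move=> /= <-; apply: eq_bigr => i _.
have -> : vnorm2 ((a i).1 - (b i).1) = \sum_(j < m i - 3) ((a i).1 0 j - (b i).1 0 j) ^+ 2.
  by rewrite /vnorm2; apply: eq_bigr => j _; rewrite !mxE.
by rewrite big_sumType qnorm2_sub_qcoord.
Qed.


Lemma coord_le1 (a : dpt) t : in_dom a -> `|coord a t| <= 1.
Proof.
case: t => i s da; have : coord a (cell s) ^+ 2 <= 1.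
  rewrite -(da i) block_norm2_coord (bigD1 s) //= lerDl.
  by apply: sumr_ge0 => *; exact: sqr_ge0.
by rewrite ler_norml => ?; apply/andP; split; nra.
Qed.

Lemma in_dom_cluster (b : nat -> dpt) : (forall n, in_dom (b n)) ->
  exists2 c, in_dom c & exists2 f : nat -> nat, increasing_seq f &
    ddist2 c (b (f n)) @[n --> \oo] --> 0.
Proof.
move=> db; have [f incf cvgf] : exists2 f : nat -> nat, increasing_seq f &
    forall t, cvgn ((fun n => coord (b n) t) \o f).
  apply: bolzano_weierstrass_fin => t; exists 1; split => // M M1 n _.
  exact: le_trans (coord_le1 t (db n)) (ltW M1).
pose L t := lim (coord (b (f n)) t @[n --> \oo]).
pose c := (fun i => (\row_j L (@cell i (inl j)), quat_of (fun l => L (@cell i (inr l))))) : dpt.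
have cL t : coord c t = L t by case: t => i [j|l]; rewrite /coord /= ?mxE ?qcoordK.
have bc t : coord (b (f n)) t @[n --> \oo] --> coord c t by rewrite cL; exact: cvgf.
exists c.
  move=> i; have := cvg_sum_sqr (v := fun n (s : 'I_(m i - 3) + 'I_4) => coord (b (f n)) (cell s))
    (fun s => bc (cell s)).
  rewrite -block_norm2_coord; under eq_cvg do rewrite -block_norm2_coord db.
  by move/(cvg_lim (@Rhausdorff R)); rewrite lim_cst.
exists f => //; under eq_cvg do rewrite ddist2_coord.
apply: cvg_trans (cvg_sum_sqr (w := fun=> 0) _) _ => [t|].
  by rewrite -(subrr (coord c t)); apply: cvgB => //; exact: cvg_cst.
by rewrite big1 => [|t _]; [exact: cvg_refl | exact: expr0n].
Qed.

End Compactness.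

Section QuotientMap.
Local Open Scope classical_set_scope.
Variable R : realType.
Variables (k : nat) (m : 'I_k -> nat).
Local Notation dpt := (dpt R m).
Local Notation tpt := (tpt R m).

Lemma openin_preimage_proj (U : tpt -> Prop) :
  openin (@in_tgt R k m) (@tdist2 R k m) U ->
  openin (@in_dom R k m) (@ddist2 R k m) (fun a => U (proj a)).
Proof.
move=> oU a da Ua; have [e [e0 eU]] := oU _ (in_tgt_proj da) Ua.
have [d [d0 dd]] := proj_continuous da e0.
by exists d; split => // b db ab; apply: eU; [exact: in_tgt_proj | exact: dd].
Qed.

(* [proj] is a closed map: a sequence of points outside [U] accumulating at [y] lifts to a
   sequence with a cluster point [c], and continuity forces [proj c = y]. *)
Lemma openin_of_preimage_proj (U : tpt -> Prop) :
  (forall y : tpt, in_tgt y -> exists a : dpt, in_dom a /\ proj a = y) ->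
  openin (@in_dom R k m) (@ddist2 R k m) (fun a => U (proj a)) ->
  openin (@in_tgt R k m) (@tdist2 R k m) U.
Proof.
move=> onto oV y ty Uy; apply: contrapT => noball.
have /choice[b hb] : forall n : nat, exists b : dpt,
    [/\ in_dom b, tdist2 y (proj b) < n.+1%:R^-1 & ~ U (proj b)].
  move=> n; apply: contrapT => nob.
  apply: noball; exists n.+1%:R^-1; split => [|z tz yz]; first by rewrite invr_gt0.
  have [a [da az]] := onto z tz; apply: contrapT => nUz.
  by apply: nob; exists a; rewrite az.
have db n : in_dom (b n) by case: (hb n).
have [c dc [f incf cbf]] := in_dom_cluster db.
have yc : proj c = y.
  apply: tdist2_eq0; apply/eqP; rewrite eq_le tdist2_ge0 andbT.
  apply/ler_addgt0Pr => e e0; rewrite add0r.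
  have k0 : 0 < 2 ^+ k :> R by rewrite exprn_gt0.
  near \oo => n.
  have cb : 2 ^+ k * ddist2 c (b (f n)) < e / 4.
    rewrite mulrC -ltr_pdivlMr //; near: n.
    by apply: (cvgr_lt 0 cbf); rewrite !divr_gt0.
  have yb : tdist2 y (proj (b (f n))) < e / 4.
    case: (hb (f n)) => _ + _; move/lt_trans; apply; near: n.
    apply: (cvgr_lt 0 (cvg_comp _ _ (increasing_seq_cvgn incf) cvg_harmonic)).
    by rewrite divr_gt0.
  have := tdist2_triangle (proj c) (proj (b (f n))) y; have := tdist2_proj_le dc (db (f n)).
  by rewrite (tdist2C (proj (b (f n))) y); lra.
have [e [e0 eV]] := oV c dc (eq_ind_r U Uy yc).
near \oo => n.
case: (hb (f n)) => _ _; apply; apply: eV; first exact: db.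
by near: n; apply: (cvgr_lt 0 cbf).
Unshelve. all: end_near.
Qed.

End QuotientMap.

Unset Implicit Arguments.
Theorem theorem3 (R : realType) (k : nat) (m : 'I_k -> nat)
  (hk : (2 <= k)%N) (hm : forall i, (4 <= m i)%N) :
  (* proj maps S^{m_1} x ... x S^{m_k} into S^m ... *)
  (forall a : dpt R m, in_dom a -> in_tgt (proj a)) /\
  (* ... onto S^m ... *)
  (forall y : tpt R m, in_tgt y -> exists a, in_dom a /\ proj a = y) /\
  (* ... its fibres are exactly the Sp(1)^{k-1}-orbits ... *)
  (forall a b : dpt R m, in_dom a -> in_dom b ->
     (proj a = proj b <-> same_orbit a b)) /\
  (* ... it is continuous ... *)
  (forall a : dpt R m, in_dom a -> forall e : R, 0 < e ->
     exists d : R, 0 < d /\ forall b, in_dom b -> ddist2 a b < d ->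
       tdist2 (proj a) (proj b) < e) /\
  (* ... and it is a quotient map, so it induces a homeomorphism
     (S^{m_1} x ... x S^{m_k}) / Sp(1)^{k-1} ~= S^m *)
  (forall U : tpt R m -> Prop,
     openin (@in_tgt R k m) (@tdist2 R k m) U <->
     openin (@in_dom R k m) (@ddist2 R k m) (fun a => U (proj a))).
Proof.
case: k m hk hm => [//|n] m _ _.
have onto := @proj_surj R n m.
split; first exact: in_tgt_proj.
split; first exact: onto.
split.
  move=> a b da db; split; last exact: proj_eq_of_orbit.
  by move/(rawproj_eq_of_proj da db); exact: same_orbit_of_rawproj.
split; first exact: proj_continuous.
by move=> U; split; [exact: openin_preimage_proj | exact: openin_of_preimage_proj].
Qed.
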